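(* Let $K$ be a field, $S=K[x_1,\ldots,x_n]$, $I\subset S$ a monomial ideal with $I\ne S$, with $\mathbb{Z}^n$-graded minimal free resolution of $S/I$, multidegrees $a_{ij}$ and scalar matrices $\lambda^{(i)}$ as in the context. Let $1\le i\le p$ and let $\mu=(\mu_1,\ldots,\mu_{\beta_i})^T\in K^{\beta_i}$ with $\lambda^{(i)}\mu=0$. Let $k_1<\cdots<k_r$ be the indices with $\mu_{k_t}\ne0$. Then there exists $\rho=(\rho_1,\ldots,\rho_{\beta_{i+1}})^T\in K^{\beta_{i+1}}$ with $\lambda^{(i+1)}\rho=\mu$ and such that $x^{a_{i+1,j}}$ divides $\operatorname{lcm}(x^{a_{ik_1}},\ldots,x^{a_{ik_r}})$ for all $j$ with $\rho_j\ne0$.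
   Context: For $a\in\mathbb{N}^n$, $x^a=x_1^{a(1)}\cdots x_n^{a(n)}$. Let $0\to F_p\to\cdots\to F_1\to F_0\to S/I\to 0$ be the $\mathbb{Z}^n$-graded minimal free resolution of $S/I$ with differential $\partial$, where $F_0=S$ with basis $f_{01}$ of degree $0$, and $F_i=\bigoplus_{j=1}^{\beta_i}Sf_{ij}$ with $f_{ij}$ homogeneous of multidegree $a_{ij}\in\mathbb{N}^n$; set $\beta_{p+1}=0$ and $\lambda^{(p+1)}$ the empty matrix. Write $\partial(f_{ij})=\sum_k\lambda^{(i)}_{kj}x^{a_{ij}-a_{i-1,k}}f_{i-1,k}$ with $\lambda^{(i)}_{kj}\in K$, where $\lambda^{(i)}_{kj}=0$ whenever $a_{ij}-a_{i-1,k}\notin\mathbb{N}^n$; $\lambda^{(i)}=(\lambda^{(i)}_{kj})\in K^{\beta_{i-1}\times\beta_i}$. The lcm of an empty family is $1$. *)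

From HB Require Import structures.
From mathcomp Require Import all_boot all_order all_algebra.
From mathcomp Require Import multinomials.mpoly.
Set Implicit Arguments. Unset Strict Implicit. Unset Printing Implicit Defensive.
Import GRing.Theory.
Local Open Scope ring_scope.

Definition poly_dvd (K : fieldType) (n : nat) (f g : {mpoly K[n]}) : Prop :=
  exists q : {mpoly K[n]}, g = q * f.

(* lcm of a finite family of exponent vectors (lcm of the empty family is 0,
   i.e. the monomial 1). *)
Definition mlcm_seq (n : nat) (s : seq 'X_{1..n}) : 'X_{1..n} :=
  foldr (@mlcm n) 0%MM s.

Definition is_ideal (K : fieldType) (n : nat) (I : {pred {mpoly K[n]}}) : Prop :=
  [/\ 0 \in I, (forall f g, f \in I -> g \in I -> f + g \in I)
    & (forall f g, g \in I -> f * g \in I)].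

Definition monomial_ideal (K : fieldType) (n : nat) (I : {pred {mpoly K[n]}}) : Prop :=
  is_ideal I /\
  forall f, f \in I -> exists s : seq ('X_{1..n} * {mpoly K[n]}),
      all (fun x => 'X_[x.1] \in I) s /\ f = \sum_(x <- s) x.2 * 'X_[x.1].

(* Indexing convention: beta i = rank of F_i, a i j = multidegree of f_ij
   (j zero-based), and lam i = lambda^(i+1), a beta_i x beta_(i+1) matrix.
   diff i = matrix of the differential d_{i+1} : F_{i+1} -> F_i, acting on
   column vectors: entry (k,j) = lam i k j * x^(a (i+1) j - a i k). *)
Definition diff (K : fieldType) (n : nat) (beta : nat -> nat)
  (a : forall i, 'I_(beta i) -> 'X_{1..n})
  (lam : forall i, 'M[K]_(beta i, beta i.+1)) (i : nat)
  : 'M[{mpoly K[n]}]_(beta i, beta i.+1) :=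
  \matrix_(k, j) (lam i k j *: 'X_[(a i.+1 j - a i k)%MM]).

Definition is_graded_min_free_res (K : fieldType) (n : nat)
  (I : {pred {mpoly K[n]}}) (p : nat) (beta : nat -> nat)
  (a : forall i, 'I_(beta i) -> 'X_{1..n})
  (lam : forall i, 'M[K]_(beta i, beta i.+1)) : Prop :=
  [/\ beta 0 = 1%N,
      (forall k, a 0 k = 0%MM),
      (forall i, (p < i)%N -> beta i = 0%N) &
   [/\
      (forall i k j, lam i k j != 0 -> (a i k <= a i.+1 j)%MM),
      (* minimality: all entries of the differentials lie in (x_1..x_n) *)
      (forall i k j, lam i k j != 0 -> a i k != a i.+1 j),
      (forall i (v : 'cV[{mpoly K[n]}]_(beta i.+1)),
          diff a lam i *m v = 0 <->
          exists w : 'cV[{mpoly K[n]}]_(beta i.+2), v = diff a lam i.+1 *m w)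
    & (* exactness at F_0: image of d_1 is the kernel I of S -> S/I *)
      (forall f : {mpoly K[n]}, f \in I <->
          exists w : 'cV[{mpoly K[n]}]_(beta 1),
            forall k : 'I_(beta 0), (diff a lam 0 *m w) k 0 = f)]].

From HB Require Import structures.
From mathcomp Require Import all_boot all_order all_algebra.
From mathcomp Require Import multinomials.mpoly.
Import GRing.Theory.
Local Open Scope ring_scope.

(* Let L be the multidegree of the lcm. Since λ^(i) μ = 0, the vector
   v = Σ_k μ_k x^(L - a_ik) f_ik is a cycle of F_i, homogeneous of degree L,
   so by exactness v = ∂(w) for some w ∈ F_(i+1). Reading off the degree-L
   part of w, i.e. ρ_j = coefficient of x^L in x^(a_(i+1,j)) w_j, gives a
   scalar vector with λ^(i+1) ρ = μ, because ∂ is homogeneous; and ρ_j ≠ 0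
   forces a_(i+1,j) ≤ L. *)

Lemma mlcm_seq_ub (n : nat) (s : seq 'X_{1..n}) (m : 'X_{1..n}) :
  m \in s -> (m <= mlcm_seq s)%MM.
Proof.
elim: s => [//|m' s IHs]; rewrite inE => /predU1P [->|m_s] /=.
  exact: lem_mlcml.
exact: lepm_trans (IHs m_s) (lem_mlcmr _ _).
Qed.

Lemma addm_subm_chain (n : nat) (m1 m2 m3 : 'X_{1..n}) :
  (m1 <= m2)%MM -> (m2 <= m3)%MM -> (m2 - m1 + (m3 - m2) = m3 - m1)%MM.
Proof.
move=> /mnm_lepP le12 /mnm_lepP le23; apply/mnmP => i.
by rewrite mnmDE !mnmBE addnC addnBA ?subnK.
Qed.

Lemma mcoeffXM (K : fieldType) (n : nat) (d m : 'X_{1..n}) (f : {mpoly K[n]}) :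
  ('X_[d] * f)@_m = if (d <= m)%MM then f@_(m - d)%MM else 0.
Proof.
case: ifP => le_dm; first by rewrite mulrC -{1}(submK le_dm) addmC mcoeffMX.
apply/eqP; apply: contraFT le_dm; rewrite -mcoeff_msupp mulrC.
by rewrite (perm_mem (msuppMX f d)) => /mapP [m' _ ->]; apply: lem_addr.
Qed.

Lemma poly_dvd_mpolyX (K : fieldType) (n : nat) (m1 m2 : 'X_{1..n}) :
  (m1 <= m2)%MM -> poly_dvd ('X_[m1] : {mpoly K[n]}) 'X_[m2].
Proof. by move=> le12; exists 'X_[m2 - m1]; rewrite -mpolyXD submK. Qed.

Section GradedCoefficients.

Context {K : fieldType} {n : nat} {beta : nat -> nat}.
Context {a : forall i, 'I_(beta i) -> 'X_{1..n}}.
Context {lam : forall i, 'M[K]_(beta i, beta i.+1)}.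
Hypothesis lam_graded : forall i k j, lam i k j != 0 -> (a i k <= a i.+1 j)%MM.

(* [graded_coeff d L v] is the degree-L part of v = Σ_k v_k f_k, written in
   the basis x^(L - d_k) f_k, where d_k is the degree of f_k. *)
Definition graded_coeff {b : nat} (d : 'I_b -> 'X_{1..n}) (L : 'X_{1..n})
    (v : 'cV[{mpoly K[n]}]_b) : 'cV[K]_b :=
  \col_k ('X_[d k] * v k 0)@_L.

Definition homogenize {b : nat} (d : 'I_b -> 'X_{1..n}) (L : 'X_{1..n})
    (mu : 'cV[K]_b) : 'cV[{mpoly K[n]}]_b :=
  \col_k (mu k 0 *: 'X_[L - d k]).

Lemma graded_coeff_ub (b : nat) (d : 'I_b -> 'X_{1..n}) (L : 'X_{1..n})
    (v : 'cV[{mpoly K[n]}]_b) (k : 'I_b) :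
  graded_coeff d L v k 0 != 0 -> (d k <= L)%MM.
Proof. by rewrite mxE mcoeffXM; case: ifP; rewrite ?eqxx. Qed.

Lemma graded_coeff_homogenize (b : nat) (d : 'I_b -> 'X_{1..n})
    (L : 'X_{1..n}) (mu : 'cV[K]_b) :
  (forall k, mu k 0 != 0 -> (d k <= L)%MM) ->
  graded_coeff d L (homogenize d L mu) = mu.
Proof.
move=> mu_ub; apply/matrixP => k j; rewrite (ord1 j) !mxE.
have [->|mu_k] := eqVneq (mu k 0) 0; first by rewrite scale0r mulr0 mcoeff0.
by rewrite -scalerAr mcoeffZ -mpolyXD addmC submK ?mu_ub // mcoeffX eqxx mulr1.
Qed.

Lemma graded_coeff_diff (i : nat) (L : 'X_{1..n})
    (w : 'cV[{mpoly K[n]}]_(beta i.+1)) :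
  graded_coeff (a i) L (diff a lam i *m w) = lam i *m graded_coeff (a i.+1) L w.
Proof.
apply/matrixP => k j; rewrite (ord1 j) !mxE mulr_sumr raddf_sum /=.
apply: eq_bigr => l _; rewrite !mxE.
have [->|lam_kl] := eqVneq (lam i k l) 0.
  by rewrite scale0r !(mul0r, mulr0, mcoeff0).
by rewrite -scalerAl -scalerAr mcoeffZ mulrA -mpolyXD addmC submK ?lam_graded.
Qed.

Lemma diff_homogenize (i : nat) (L : 'X_{1..n}) (mu : 'cV[K]_(beta i.+1)) :
  (forall k, mu k 0 != 0 -> (a i.+1 k <= L)%MM) ->
  diff a lam i *m homogenize (a i.+1) L mu = homogenize (a i) L (lam i *m mu).
Proof.
move=> mu_ub; apply/matrixP => k j; rewrite !mxE scaler_suml.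
apply: eq_bigr => l _; rewrite !mxE.
have [->|lam_kl] := eqVneq (lam i k l) 0; first by rewrite !(scale0r, mul0r).
have [->|mu_l] := eqVneq (mu l 0) 0; first by rewrite !(scale0r, mulr0).
rewrite -scalerAl -scalerAr scalerA -mpolyXD.
by rewrite addm_subm_chain ?lam_graded ?mu_ub.
Qed.

End GradedCoefficients.

Theorem lemma1p8 (K : fieldType) (n : nat) (I : {pred {mpoly K[n]}})
  (p : nat) (beta : nat -> nat)
  (a : forall i, 'I_(beta i) -> 'X_{1..n})
  (lam : forall i, 'M[K]_(beta i, beta i.+1)) :
  monomial_ideal I -> ~ (1 \in I) ->
  is_graded_min_free_res I p a lam ->
  forall (m : nat), (m < p)%N ->
  forall mu : 'cV[K]_(beta m.+1), lam m *m mu = 0 ->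
  exists rho : 'cV[K]_(beta m.+2),
    lam m.+1 *m rho = mu /\
    forall j, rho j 0 != 0 ->
      poly_dvd ('X_[a m.+2 j] : {mpoly K[n]})
        'X_[mlcm_seq [seq a m.+1 k | k <- enum 'I_(beta m.+1) & mu k 0 != 0]].
Proof.
move=> _ _ [_ _ _ [lam_graded _ exact_diff _]] m _ mu lam_mu.
set L := mlcm_seq _.
have mu_ub k : mu k 0 != 0 -> (a m.+1 k <= L)%MM.
  by move=> mu_k; apply/mlcm_seq_ub/map_f; rewrite mem_filter mu_k mem_enum.
have cycle_v : diff a lam m *m homogenize (a m.+1) L mu = 0.
  rewrite (diff_homogenize lam_graded) // lam_mu; apply/matrixP => k j.
  by rewrite !mxE scale0r.
have [w v_eq] := proj1 (exact_diff m _) cycle_v.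
exists (graded_coeff (a m.+2) L w); split.
  by rewrite -(graded_coeff_diff lam_graded) -v_eq graded_coeff_homogenize.
by move=> j /graded_coeff_ub; apply: poly_dvd_mpolyX.
Qed.
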